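(* Let $X$ be a Banach space. If $X$ contains a ccs Daugavet point, then $X$ has the strong diameter 2 property (every convex combination of slices of $B_X$ has diameter $2$); in particular $X$ is not strongly regular.
   Context: $X$ is a real or complex Banach space with closed unit ball $B_X$ and unit sphere $S_X$. A slice of $B_X$ is a non-empty set $S(x^*,\delta)=\{y\in B_X:\operatorname{Re}x^*(y)>\|x^*\|-\delta\}$ with $x^*\in X^*$, $\delta>0$. A convex combination of slices (ccs) of $B_X$ is a set $\sum_{i=1}^n\lambda_iS_i$ where $\lambda_i\in(0,1]$, $\sum_i\lambda_i=1$ and each $S_i$ is a slice of $B_X$. An element $x\in S_X$ is a ccs Daugavet point if $\sup_{y\in C}\|x-y\|=2$ for every ccs $C$ of $B_X$. $X$ is strongly regular if every non-empty closed bounded convex subset of $X$ contains convex combinations of its slices of arbitrarily small diameter. *)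

From HB Require Import structures.
From mathcomp Require Import all_boot all_order all_algebra.
From mathcomp Require Import all_classical all_reals all_analysis.
From mathcomp Require Import complex.
Set Implicit Arguments. Unset Strict Implicit. Unset Printing Implicit Defensive.
Import Order.TTheory GRing.Theory Num.Theory.
Import numFieldNormedType.Exports.
Local Open Scope ring_scope.
Local Open Scope classical_set_scope.

(* Scalars: a numFieldType K (below: K = R for real spaces, K = R[i] for
   complex spaces, R : realType).  [re] is the real part map
   (identity for K = R, Num.Re for K = R[i]). *)

Section BanachDefs.
Variables (K : numFieldType) (re : K -> K) (X : normedModType K).

Definition is_supremum (A : set K) (M : K) : Prop :=
  (forall a, A a -> a <= M) /\
  (forall e : K, 0 < e -> exists2 a, A a & M - e < a).

Definition unit_ball : set X := [set y | `|y| <= 1].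
Definition unit_sphere : set X := [set y | `|y| = 1].

Definition dual_elt (f : {linear X -> K^o}) : Prop := continuous f.

Definition dual_norm_is (f : {linear X -> K^o}) (M : K) : Prop :=
  is_supremum [set `|f y| | y in unit_ball] M.

Definition is_slice (S : set X) : Prop :=
  exists (f : {linear X -> K^o}) (M delta : K),
    [/\ dual_elt f, dual_norm_is f M, 0 < delta,
        S = [set y | unit_ball y /\ M - delta < re (f y)] & S !=set0].

Definition is_slice_of (A : set X) (S : set X) : Prop :=
  exists (f : {linear X -> K^o}) (M delta : K),
    [/\ dual_elt f, is_supremum [set re (f y) | y in A] M, 0 < delta,
        S = [set y | A y /\ M - delta < re (f y)] & S !=set0].

Definition is_ccs_with (isS : set X -> Prop) (C : set X) : Prop :=
  exists (n : nat) (lam : 'I_n -> K) (S : 'I_n -> set X),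
    [/\ (forall i, 0 < lam i <= 1), \sum_(i < n) lam i = 1,
        (forall i, isS (S i)) &
        C = [set x | exists y : 'I_n -> X,
                       (forall i, S i (y i)) /\ x = \sum_(i < n) lam i *: y i]].

Definition is_ccs (C : set X) : Prop := is_ccs_with is_slice C.

Definition diam_is (C : set X) (d : K) : Prop :=
  is_supremum [set `|y - z| | y in C & z in C] d.

Definition ccs_daugavet_point (x : X) : Prop :=
  unit_sphere x /\
  forall C, is_ccs C -> is_supremum [set `|x - y| | y in C] 2.

Definition SD2P : Prop := forall C, is_ccs C -> diam_is C 2.

Definition convex_subset (A : set X) : Prop :=
  forall x y t, A x -> A y -> 0 <= t <= 1 -> A (t *: x + (1 - t) *: y).

Definition bounded_subset (A : set X) : Prop :=
  exists M : K, forall x, A x -> `|x| <= M.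

Definition strongly_regular : Prop :=
  forall A : set X, A !=set0 -> closed A -> bounded_subset A -> convex_subset A ->
    forall e : K, 0 < e ->
      exists C d, [/\ is_ccs_with (is_slice_of A) C, C `<=` A, diam_is C d & d < e].

End BanachDefs.

Definition realRe (R : realType) : R -> R := fun x => x.
Definition cplxRe (R : realType) : R[i] -> R[i] := fun z => Num.Theory.Re z.

From HB Require Import structures.
From mathcomp Require Import all_boot all_order all_algebra.
From mathcomp Require Import all_classical all_reals all_analysis.
From mathcomp Require Import complex.
From mathcomp Require Import ring.
Set Implicit Arguments. Unset Strict Implicit. Unset Printing Implicit Defensive.
Import Order.TTheory GRing.Theory Num.Theory.
Import numFieldNormedType.Exports.
Local Open Scope ring_scope.
Local Open Scope classical_set_scope.

(* Every ccs C = sum_i lam_i S_i lies in B_X, so diam C <= 2.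
   Conversely, D = sum_i (lam_i/2) S_i + sum_i (lam_i/2) (-S_i) is again a
   ccs (the reflection -S of a slice is a slice), and each d in D has the
   form (c1 - c2)/2 with c1, c2 in C.  If x is a ccs Daugavet point, some
   d in D has ||x - d|| close to 2, hence ||d|| close to 1 and
   ||c1 - c2|| = 2 ||d|| close to 2.  For the second claim, strong
   regularity applied to B_X (closed, bounded, convex) yields a ccs of
   slices of B_X of diameter < 1; a slice of B_X in the sense of
   [is_slice_of] is a slice in the sense of [is_slice], because the
   supremum of Re f over B_X is the dual norm of f, so SD2P is contradicted.

   Everything is done over an arbitrary numFieldType K with a "real part"
   map [re] satisfying re z <= |z| and re (u z) = |z| for some unimodular u;
   the real and complex scalar fields are the two instances. *)

Section BallGeometry.
Variables (K : numFieldType) (re : K -> K) (X : normedModType K).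

Lemma slice_sub_ball (S : set X) : is_slice re S -> S `<=` unit_ball (X:=X).
Proof. by move=> [f [M [d [_ _ _ -> _]]]] y []. Qed.

Lemma ccs_sub_ball (C : set X) : is_ccs re C -> C `<=` unit_ball (X:=X).
Proof.
move=> [n [lam [S [lam01 lam_sum S_slice ->]]]] _ [y [Sy ->]].
rewrite /unit_ball /=; apply: (le_trans (ler_norm_sum _ _ _)).
rewrite -lam_sum; apply: ler_sum => i _.
have /andP[lam_gt0 _] := lam01 i.
rewrite normrZ (gtr0_norm lam_gt0) ler_piMr ?(ltW lam_gt0) //.
exact: slice_sub_ball (S_slice i) _ (Sy i).
Qed.

Lemma ccs_dist_le2 (C : set X) (y z : X) :
  is_ccs re C -> C y -> C z -> `|y - z| <= 2.
Proof.
move=> HC Cy Cz; apply: (le_trans (ler_normB _ _)).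
by rewrite -[2]/(1 + 1); apply: lerD; apply: ccs_sub_ball HC _ _.
Qed.

(* The reflection -S of a slice S(f, delta) is the slice S(-f, delta). *)
Lemma slice_reflect (S : set X) :
  is_slice re S -> is_slice re [set y | S (- y)].
Proof.
move=> [f [M [d [f_cont [ub approx] d_gt0 -> [s Ss]]]]].
exists (\- f), M, d; split => //.
- by move=> x; apply: continuousN; exact: f_cont.
- split=> [_ [y By <-]|e e_gt0].
    by rewrite /= normrN; apply: ub; exists y.
  have [_ [y By <-] lt_e] := approx e e_gt0.
  by exists `|(\- f) y|; [exists y | rewrite /= normrN].
- by apply/seteqP; split=> y /=; rewrite /unit_ball /= normrN linearN.
- by exists (- s); rewrite /= opprK.
Qed.

End BallGeometry.

Section Doubling.
Variable n : nat.

Definition fold_ord (i : 'I_(n + n)) : 'I_n :=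
  match fintype.split i with inl j => j | inr j => j end.

Lemma fold_lshift (j : 'I_n) : fold_ord (lshift n j) = j.
Proof. by rewrite /fold_ord (unsplitK (inl j)). Qed.

Lemma fold_rshift (j : 'I_n) : fold_ord (rshift n j) = j.
Proof. by rewrite /fold_ord (unsplitK (inr j)). Qed.

Definition double_sets {X : zmodType} (S : 'I_n -> set X) (i : 'I_(n + n)) :=
  match fintype.split i with
  | inl j => S j
  | inr j => [set y | S j (- y)]
  end.

Lemma double_sets_lshift {X : zmodType} (S : 'I_n -> set X) j :
  double_sets S (lshift n j) = S j.
Proof. by rewrite /double_sets (unsplitK (inl j)). Qed.

Lemma double_sets_rshift {X : zmodType} (S : 'I_n -> set X) j :
  double_sets S (rshift n j) = [set y | S j (- y)].
Proof. by rewrite /double_sets (unsplitK (inr j)). Qed.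

End Doubling.

Section SymmetricCcs.
Variables (K : numFieldType) (re : K -> K) (X : normedModType K).

Lemma halved_weights n (lam : 'I_n -> K) :
  (forall i, 0 < lam i <= 1) -> \sum_(i < n) lam i = 1 ->
  (forall i, 0 < lam (fold_ord i) / 2 <= 1) /\
  \sum_(i < n + n) lam (fold_ord i) / 2 = 1.
Proof.
move=> lam01 lam_sum; split=> [i|].
  have /andP[lam_gt0 lam_le1] := lam01 (fold_ord i).
  rewrite divr_gt0 //= ler_pdivrMr // mul1r.
  by apply: le_trans lam_le1 _; rewrite ler1n.
rewrite big_split_ord /= -big_distrl -big_distrl /=.
rewrite (eq_bigr _ (fun j _ => congr1 lam (fold_lshift j))).
rewrite (eq_bigr _ (fun j _ => congr1 lam (fold_rshift j))).
by rewrite lam_sum -mulrDl divff // pnatr_eq0.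
Qed.

Lemma ccs_symmetrize (C : set X) : is_ccs re C ->
  exists2 D : set X, is_ccs re D &
    forall d, D d -> exists c1 c2, [/\ C c1, C c2 & c1 - c2 = 2 *: d].
Proof.
move=> [n [lam [S [lam01 lam_sum S_slice ->]]]].
have [lam'01 lam'_sum] := halved_weights lam01 lam_sum.
exists [set x | exists y : 'I_(n + n) -> X,
  (forall i, double_sets S i (y i)) /\
  x = \sum_(i < n + n) (lam (fold_ord i) / 2) *: y i].
  exists (n + n), (fun i => lam (fold_ord i) / 2), (double_sets S).
  split=> // i; rewrite /double_sets; case: fintype.split => j.
    exact: S_slice.
  exact: slice_reflect.
move=> _ [y [Sy ->]].
have Sy_l j : S j (y (lshift n j)) by rewrite -double_sets_lshift.
have Sy_r j : S j (- y (rshift n j)) by move: (Sy (rshift n j)); rewrite double_sets_rshift.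
exists (\sum_(j < n) lam j *: y (lshift n j)),
       (\sum_(j < n) lam j *: - y (rshift n j)); split.
- by exists (fun j => y (lshift n j)).
- by exists (fun j => - y (rshift n j)).
rewrite big_split_ord /= scalerDr !scaler_sumr -sumrN.
congr (_ + _); apply: eq_bigr => j _;
  rewrite ?fold_lshift ?fold_rshift scalerA mulrC divfK ?pnatr_eq0 //.
by rewrite scalerN opprK.
Qed.

Theorem ccs_daugavet_SD2P : (exists x : X, ccs_daugavet_point re x) -> SD2P re X.
Proof.
move=> [x [x_sphere x_daugavet]] C HC; split.
  by move=> _ [y Cy [z Cz <-]]; exact: ccs_dist_le2 HC Cy Cz.
move=> e e_gt0.
have [D HD D_mid] := ccs_symmetrize HC.
have [_ [d Dd <-] far] := (x_daugavet D HD).2 _ (divr_gt0 e_gt0 (ltr0n _ 2)).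
have [c1 [c2 [Cc1 Cc2 c12]]] := D_mid d Dd.
exists `|c1 - c2|; first by exists c1 => //; exists c2.
have d_large : 1 - e / 2 < `|d|.
  have := ler_normB x d; rewrite x_sphere => dist_le.
  by rewrite -(ltrD2l 1) addrA -[1 + 1]/2%:R (lt_le_trans far dist_le).
rewrite c12 normrZ (ger0_norm (ler0n _ 2)).
have -> : 2 - e = 2 * (1 - e / 2) by rewrite mulrBr mulr1 mulrC divfK ?pnatr_eq0.
by rewrite ltr_pM2l.
Qed.

End SymmetricCcs.

Section NotStronglyRegular.
Variables (K : numFieldType) (re : K -> K) (X : normedModType K).

(* [re] is dominated by the modulus, and the modulus is attained by [re]
   after a unimodular rotation: these are the properties of the real part
   used to identify sup Re f(B_X) with the dual norm of f. *)
Hypothesis re_le_norm : forall z : K, re z <= `|z|.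
Hypothesis re_rotate : forall z : K, exists u : K, `|u| = 1 /\ re (u * z) = `|z|.

(* A slice of the set B_X is a slice of the unit ball in the sense of
   [is_slice]: sup Re f(B_X) = ||f|| since B_X is invariant under rotations. *)
Lemma ball_slice_is_slice (S : set X) :
  is_slice_of re (unit_ball (X:=X)) S -> is_slice re S.
Proof.
move=> [f [M [d [f_cont [ub approx] d_gt0 -> S_ne0]]]].
exists f, M, d; split => //; split=> [_ [y By <-]|e e_gt0].
  have [u [u_norm1 re_uf]] := re_rotate (f y).
  rewrite -re_uf -linearZ /=; apply: ub; exists (u *: y) => //.
  by rewrite /unit_ball /= normrZ u_norm1 mul1r.
have [_ [y By <-] lt_e] := approx e e_gt0.
by exists `|f y|; [exists y | exact: lt_le_trans lt_e (re_le_norm _)].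
Qed.

Lemma unit_ball_closed : closed (unit_ball (X:=X)).
Proof.
move=> y y_adh; apply/negPn/negP => y_out.
have gap_gt0 : 0 < `|y| - 1 by rewrite subr_gt0 real_ltNge ?num_real.
have [z [Bz yz]] := y_adh _ (nbhsx_ballx y _ gap_gt0).
move: yz; rewrite -ball_normE /ball_ /= => yz.
have : `|y| < `|y|.
  apply: (le_lt_trans (_ : `|y| <= `|y - z| + `|z|)).
    by rewrite -{1}(subrK z y) ler_normD.
  by rewrite -{1}(subrK 1 `|y|) ltr_leD.
by rewrite ltxx.
Qed.

Lemma unit_ball_convex : convex_subset (unit_ball (X:=X)).
Proof.
move=> a b t Ba Bb /andP[t_ge0 t_le1]; rewrite /unit_ball /=.
apply: (le_trans (ler_normD _ _)).
rewrite !normrZ ger0_norm // ger0_norm ?subr_ge0 //.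
apply: le_trans (_ : t * 1 + (1 - t) * 1 <= 1); last by rewrite !mulr1 addrC subrK.
by apply: lerD; apply: ler_wpM2l; rewrite ?subr_ge0.
Qed.

(* Strong regularity, applied to the closed bounded convex set B_X, yields a
   ccs of B_X of diameter < 1, which SD2P forbids. *)
Theorem SD2P_not_strongly_regular : SD2P re X -> ~ strongly_regular re X.
Proof.
move=> sd2p sr.
have [C [d [C_ccs _ C_diam d_lt1]]] : exists C d,
    [/\ is_ccs_with (is_slice_of re (unit_ball (X:=X))) C,
        C `<=` unit_ball (X:=X), diam_is C d & d < 1].
  apply: sr ltr01.
  - by exists 0; rewrite /unit_ball /= normr0.
  - exact: unit_ball_closed.
  - by exists 1.
  - exact: unit_ball_convex.
have C_ccs' : is_ccs re C.
  move: C_ccs => [n [lam [S [lam01 lam_sum S_slice ->]]]].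
  by exists n, lam, S; split => // i; apply: ball_slice_is_slice.
have [a Ca a_gt1] := (sd2p C C_ccs').2 1 ltr01.
have two_sub1 : 2 - 1 = 1 :> K by rewrite -[2]/(1 + 1) addrK.
have := lt_trans (lt_le_trans a_gt1 (C_diam.1 a Ca)) d_lt1.
by rewrite two_sub1 ltxx.
Qed.

End NotStronglyRegular.

Lemma realRe_le_norm (R : realType) (z : R) : realRe z <= `|z|.
Proof. exact: ler_norm. Qed.

Lemma realRe_rotate (R : realType) (z : R) :
  exists u : R, `|u| = 1 /\ realRe (u * z) = `|z|.
Proof.
have [z_ge0|z_lt0] := leP 0 z.
  by exists 1; rewrite normr1 mul1r ger0_norm.
by exists (-1); rewrite normrN normr1 mulN1r ltr0_norm.
Qed.

(* On C = R[i], Re z <= |z| and Re ((conj z / |z|) z) = |z|. *)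
Lemma cplxRe_le_norm (R : realType) (z : R[i]) : cplxRe z <= `|z|.
Proof. exact: (leif_Re_Creal z).1. Qed.

Lemma cplxRe_rotate (R : realType) (z : R[i]) :
  exists u : R[i], `|u| = 1 /\ cplxRe (u * z) = `|z|.
Proof.
have [->|z_neq0] := eqVneq z 0.
  by exists 1; rewrite normr1 mulr0 normr0 /cplxRe raddf0.
have nz_neq0 : `|z| != 0 by rewrite normr_eq0.
exists (z^* / `|z|); split.
  by rewrite normf_div norm_conjC normr_id divff.
have -> : z^* / `|z| * z = `|z| ^+ 2 / `|z| by rewrite normCK; ring.
by rewrite /cplxRe expr2 mulfK //; apply/Creal_ReP; exact: normr_real.
Qed.

Theorem mainTheorem2 (R : realType) :
  (forall X : completeNormedModType R,
     (exists x : X, ccs_daugavet_point (@realRe R) x) ->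
     SD2P (@realRe R) X /\ ~ strongly_regular (@realRe R) X) /\
  (forall X : completeNormedModType R[i],
     (exists x : X, ccs_daugavet_point (@cplxRe R) x) ->
     SD2P (@cplxRe R) X /\ ~ strongly_regular (@cplxRe R) X).
Proof.
split=> X x_daugavet; have sd2p := ccs_daugavet_SD2P x_daugavet; split=> //.
  exact: (SD2P_not_strongly_regular (@realRe_le_norm R) (@realRe_rotate R)).
exact: (SD2P_not_strongly_regular (@cplxRe_le_norm R) (@cplxRe_rotate R)).
Qed.
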